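(* For $p\ge3$ we have $\mathcal E_p=\langle\mathcal E_3\rangle_{\mathrm{GL}_p(K)}$, where $\mathcal E_3$ is viewed as the subalgebra of $\mathcal E_p$ consisting of the maps depending only on the first three components.
   Context: $K$ is a field of characteristic $0$; $so_3(K)$ is the space of $3\times3$ skew-symmetric matrices. $T_p=\{t^{(k)}_{ij}\mid1\le i<j\le3,\ 1\le k\le p\}$ are commuting indeterminates; $K[T_p]$ is identified with polynomial functions on $so_3(K)^{\oplus p}$ and $M_3(K[T_p])$ with polynomial maps $so_3(K)^{\oplus p}\to M_3(K)$. $\mathcal E_p$ is the subalgebra of $\mathrm{SO}_3(K)$-equivariant polynomial maps ($\mathrm{SO}_3(K)$ acting by simultaneous conjugation on $so_3(K)^{\oplus p}$ and by conjugation on $M_3(K)$). $\mathrm{GL}_p(K)$ acts on $K[T_p]$ by $g\cdot t^{(k)}_{ij}=\sum_l g_{lk}t^{(l)}_{ij}$ and entrywise on $M_3(K[T_p])$; $\langle U\rangle_{\mathrm{GL}_p(K)}$ is the $\mathrm{GL}_p(K)$-submodule generated by $U$. *)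

From HB Require Import structures.
From mathcomp Require Import all_boot all_order all_algebra.
From mathcomp Require Import mpoly.
Set Implicit Arguments. Unset Strict Implicit. Unset Printing Implicit Defensive.
Import Order.TTheory GRing.Theory Num.Theory.
Local Open Scope ring_scope.

(* The three index pairs (i,j), i<j, of a 3x3 matrix, numbered by e : 'I_3:
   e = 0 <-> (0,1), e = 1 <-> (0,2), e = 2 <-> (1,2). *)
Definition pair_i (e : 'I_3) : 'I_3 := if val e == 2%N then inord 1 else inord 0.
Definition pair_j (e : 'I_3) : 'I_3 := if val e == 0%N then inord 1 else inord 2.

(* K[T_p]: polynomials in the 3p variables t^(k)_e, the variable t^(k)_e
   being 'X_(mxvec_index k e) (k : 'I_p is the component, e the pair). *)
Notation polT K p := {mpoly K[p * 3]}.
Definition tvar (K : fieldType) (p : nat) (k : 'I_p) (e : 'I_3) : polT K p :=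
  'X_(mxvec_index k e).

Definition skew (K : fieldType) (M : 'M[K]_3) : Prop := M^T = - M.
Definition SO3 (K : fieldType) (g : 'M[K]_3) : Prop :=
  g^T *m g = 1%:M /\ \det g = 1.

Definition coords (K : fieldType) (p : nat) (A : 'I_p -> 'M[K]_3) :
  'I_(p * 3) -> K :=
  fun x => mxvec (\matrix_(k < p, e < 3) A k (pair_i e) (pair_j e)) 0 x.

Definition evalF (K : fieldType) (p : nat) (F : 'M[polT K p]_3)
  (A : 'I_p -> 'M[K]_3) : 'M[K]_3 :=
  map_mx (fun q => q.@[coords A]) F.

Definition equivariant (K : fieldType) (p : nat) (F : 'M[polT K p]_3) : Prop :=
  forall (g : 'M[K]_3) (A : 'I_p -> 'M[K]_3),
    SO3 g -> (forall k, skew (A k)) ->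
    evalF F (fun k => g *m A k *m g^T) = g *m evalF F A *m g^T.

Definition depends_on_first3 (K : fieldType) (p : nat) (F : 'M[polT K p]_3)
  : Prop :=
  forall A B : 'I_p -> 'M[K]_3,
    (forall k, skew (A k)) -> (forall k, skew (B k)) ->
    (forall k : 'I_p, (k < 3)%N -> A k = B k) ->
    evalF F A = evalF F B.

(* GL_p(K) action on K[T_p]:  g . t^(k)_e = sum_l g_{lk} t^(l)_e,
   extended as a K-algebra endomorphism (substitution). *)
Definition gl_images (K : fieldType) (p : nat) (g : 'M[K]_p) :
  (p * 3).-tuple (polT K p) :=
  let r := mxvec (\matrix_(k < p, e < 3) \sum_(l < p) (g l k)%:MP * tvar K l e)
  in [tuple r 0 x | x < p * 3].

Definition glact (K : fieldType) (p : nat) (g : 'M[K]_p) (q : polT K p)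
  : polT K p := comp_mpoly (gl_images g) q.

Definition glact_mx (K : fieldType) (p : nat) (g : 'M[K]_p)
  (F : 'M[polT K p]_3) : 'M[polT K p]_3 := map_mx (glact g) F.

Definition GLspan (K : fieldType) (p : nat) (U : 'M[polT K p]_3 -> Prop)
  (F : 'M[polT K p]_3) : Prop :=
  forall S : 'M[polT K p]_3 -> Prop,
    S 0 ->
    (forall G H, S G -> S H -> S (G + H)) ->
    (forall (c : K) G, S G -> S (c%:MP *: G)) ->
    (forall (g : 'M[K]_p) G, g \in unitmx -> S G -> S (glact_mx g G)) ->
    (forall G, U G -> S G) ->
    S F.

From Pilot Require Import Defs.
From HB Require Import structures.
From mathcomp Require Import all_boot all_order all_algebra.
From mathcomp Require Import mpoly zify.
From Stdlib Require Import Classical.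
Set Implicit Arguments. Unset Strict Implicit. Unset Printing Implicit Defensive.
Import GRing.Theory Num.Theory.
Local Open Scope ring_scope.

(* Let D bound the degrees of the entries of F. It suffices to find scalars
   c_i and matrices M_i of rank at most 3 with sum_i c_i (M_i . q) = q for
   every polynomial q of degree < D: writing M_i = g_i h_i with g_i invertible
   and h_i zero below its third row, F = sum_i c_i g_i . (h_i . F), and each
   h_i . F is equivariant and only depends on the first three components.
   With <M, Q> = sum_jk M_jk Q_jk, projecting orthogonally (over the rationals)
   the vector of all products of fewer than D entries of the identity onto
   the span of the same vectors for the rank <= 3 matrices gives
   sum_i c_i <M_i, Q>^d = <1, Q>^d for rational Q of rank <= 3 and d < D.
   A matrix M maps the linear form with coefficient matrix a to the one with
   coefficient matrix M a, and (M a)_le = <M, E_le a^T>; polarizing the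
   identity over the rank <= 3 matrices Y a^T shows that the powers of
   rational linear forms are fixed, and polarizing again, so are the
   monomials of degree < D. *)

Lemma finite_spanning_family (F : fieldType) (T : Type) (P : T -> Prop) N
    (v : T -> 'rV[F]_N) :
  exists n (xs : 'I_n -> T), (forall i, P (xs i)) /\
    forall x, P x -> (v x <= \matrix_i v (xs i))%MS.
Proof.
suff grow k n (xs : 'I_n -> T) : (forall i, P (xs i)) ->
    (N - \rank (\matrix_i v (xs i)) <= k)%N ->
    exists n' (xs' : 'I_n' -> T), (forall i, P (xs' i)) /\
      forall x, P x -> (v x <= \matrix_i v (xs' i))%MS.
  have xs0 : 'I_0 -> T by case=> m; rewrite ltn0.
  by apply: (grow N 0 xs0) => [[]|]; rewrite ?leq_subr.
elim: k n xs => [|k IHk] n xs Pxs rk.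
  exists n, xs; split=> // x _; apply: submx_full.
  by rewrite /row_full eqn_leq rank_leq_col -subn_eq0 -leqn0.
case: (classic (forall x, P x -> (v x <= \matrix_i v (xs i))%MS)) => [|].
  by exists n, xs.
move=> /not_all_ex_not [x out]; have [Px x_out] := imply_to_and _ _ out.
pose xs' (i : 'I_n.+1) := if unlift ord0 i is Some j then xs j else x.
apply: (IHk n.+1 xs') => [i|]; first by rewrite /xs'; case: unliftP.
have grows : (\matrix_i v (xs i) < \matrix_i v (xs' i))%MS.
  rewrite ltmxE; apply/andP; split.
    apply/row_subP=> j; rewrite rowK (eq_row_sub (lift ord0 j)) //.
    by rewrite rowK /xs' liftK.
  apply/negP=> sub; apply: x_out; apply: submx_trans sub.
  by rewrite (eq_row_sub ord0) // rowK /xs' unlift_none.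
have := rank_ltmx grows; have := rank_leq_col (\matrix_i v (xs' i)); lia.
Qed.

Lemma trmx_mul_self_eq0 (R : realFieldType) m n (X : 'M[R]_(m, n)) :
  X^T *m X = 0 -> X = 0.
Proof.
move=> XX0; apply/matrixP=> i j; rewrite mxE.
have /eqP := congr1 (fun A : 'M_n => A j j) XX0.
rewrite !mxE psumr_eq0 => [/allP/(_ i (mem_index_enum _))|k _]; last first.
  by rewrite mxE -expr2 sqr_ge0.
by rewrite /= mxE -expr2 sqrf_eq0 => /eqP.
Qed.

Lemma orthogonal_projection (R : realFieldType) m n (S : 'M[R]_(m, n))
    (u : 'rV_n) :
  exists c : 'rV_m, (u - c *m S) *m S^T = 0.
Proof.
have ker : S^T *m cokermx (S *m S^T) = 0.
  apply: trmx_mul_self_eq0.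
  by rewrite trmx_mul trmxK mulmxA -(mulmxA _ S) -mulmxA mulmx_coker mulmx0.
have /submxP [c uSS] : (u *m S^T <= S *m S^T)%MS.
  by rewrite submxE -mulmxA ker mulmx0.
by exists c; rewrite mulmxBl uSS mulmxA subrr.
Qed.

Lemma mxrank_factor (F : fieldType) m n r (M : 'M[F]_(m, n)) :
  (\rank M <= r)%N ->
  exists (g : 'M_m) (h : 'M_(m, n)), [/\ g \in unitmx, M = g *m h &
    forall (l : 'I_m) (k : 'I_n), (r <= l)%N -> h l k = 0].
Proof.
move=> rkM; exists (col_ebase M), (pid_mx (\rank M) *m row_ebase M); split.
- exact: col_ebase_unit.
- by rewrite mulmxA mulmx_ebase.
move=> l k le_rl; rewrite mxE big1 // => j _; rewrite mxE.
by rewrite ltnNge (leq_trans rkM le_rl) andbF mul0r.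
Qed.

Lemma poly_eq0_of_horner_eq0 (R : numFieldType) (q : {poly R}) :
  (forall t, q.[t] = 0) -> q = 0.
Proof.
move=> q0; apply: (@roots_geq_poly_eq0 _ _ [seq i%:R | i <- iota 0 (size q)]).
- by apply/allP=> x /mapP[i _ ->]; rewrite /root q0.
- by rewrite map_inj_uniq ?iota_uniq // => i j /eqP; rewrite eqr_nat => /eqP.
- by rewrite size_map size_iota.
Qed.

Section Pairing.
Variables (R : comRingType) (p : nat).

Definition mxpair (M Q : 'M[R]_p) : R :=
  \sum_(j : 'I_p * 'I_p) M j.1 j.2 * Q j.1 j.2.

Lemma mxpair_sumr I (r : seq I) (P : pred I) M (Q : I -> 'M[R]_p) :
  mxpair M (\sum_(i <- r | P i) Q i) = \sum_(i <- r | P i) mxpair M (Q i).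
Proof.
rewrite /mxpair exchange_big /=; apply: eq_bigr => j _.
by rewrite summxE mulr_sumr.
Qed.

Lemma mxpairZr a M Q : mxpair M (a *: Q) = a * mxpair M Q.
Proof.
by rewrite /mxpair mulr_sumr; apply: eq_bigr => j _; rewrite mxE mulrCA.
Qed.

Lemma mxpair_expn d M Q :
  mxpair M Q ^+ d = \sum_(f : {ffun 'I_d -> 'I_p * 'I_p})
    \prod_(t < d) (M (f t).1 (f t).2 * Q (f t).1 (f t).2).
Proof.
rewrite -[in LHS](card_ord d) -prodr_const /mxpair.
exact: (bigA_distr_bigA (fun _ (j : 'I_p * 'I_p) => M j.1 j.2 * Q j.1 j.2)).
Qed.

Lemma mulmx_mxpair n (M : 'M[R]_p) (A : 'M[R]_(p, n)) l e :
  (M *m A) l e = mxpair M (delta_mx l e *m A^T).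
Proof.
have entry i k : (delta_mx l e *m A^T) i k = (i == l)%:R * A k e.
  rewrite mxE (bigD1 e) //= big1 ?addr0 => [|f /negPf fe]; rewrite !mxE ?eqxx.
    by rewrite andbT.
  by rewrite fe andbF mul0r.
rewrite mxE /mxpair -(pair_bigA _ (fun i k => M i k * (delta_mx l e *m A^T) i k)).
rewrite [RHS](bigD1 l) //= [X in _ = _ + X]big1 => [|i /negPf il]; last first.
  by apply: big1 => k _; rewrite entry il mul0r mulr0.
by rewrite addr0; apply: eq_bigr => k _; rewrite entry eqxx mul1r.
Qed.

Variable D : nat.

Definition word := {d : 'I_D & {ffun 'I_d -> 'I_p * 'I_p}}.

Definition word_vector (M : 'M[R]_p) : 'rV[R]_#|{: word}| :=
  \row_i let w : word := enum_val i in
         \prod_(t < tag w) M (tagged w t).1 (tagged w t).2.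

Lemma word_vector_dot M Q :
  (word_vector M *m (word_vector Q)^T) 0 0 = \sum_(d < D) mxpair M Q ^+ d.
Proof.
rewrite mxE; under eq_bigr do rewrite !mxE.
rewrite -(big_enum_val (fun w : word =>
  \prod_(t < tag w) M (tagged w t).1 (tagged w t).2 *
  \prod_(t < tag w) Q (tagged w t).1 (tagged w t).2)) /=.
rewrite -(sig_big_dep (J := fun d : 'I_D => {ffun 'I_d -> 'I_p * 'I_p})
  xpredT (fun _ _ => true) (fun d f => \prod_(t < d) M (f t).1 (f t).2 *
                                       \prod_(t < d) Q (f t).1 (f t).2)) /=.
apply: eq_bigr => d _; rewrite mxpair_expn.
by apply: eq_bigr => f _; rewrite big_split.
Qed.

End Pairing.

Lemma mxpair_map (R S : comRingType) (f : {rmorphism R -> S}) p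
    (M Q : 'M[R]_p) :
  mxpair (map_mx f M) (map_mx f Q) = f (mxpair M Q).
Proof. by rewrite rmorph_sum; apply: eq_bigr => j _; rewrite rmorphM !mxE. Qed.

Lemma cone_reproducing (R : realFieldType) p D (C : 'M[R]_p -> Prop)
    (U : 'M[R]_p) :
  (forall a Q, C Q -> C (a *: Q)) ->
  exists r (c : 'I_r -> R) (M : 'I_r -> 'M[R]_p), (forall i, C (M i)) /\
    forall Q, C Q -> forall d, (d < D)%N ->
      \sum_i c i * mxpair (M i) Q ^+ d = mxpair U Q ^+ d.
Proof.
move=> C_scale.
have [r [M [CM spanC]]] := finite_spanning_family C (word_vector D (p:=p)).
set B := \matrix_i word_vector D (M i) in spanC.
have [c proj] := orthogonal_projection B (word_vector D U).
have sum_orth Q : C Q -> \sum_(d < D) mxpair U Q ^+ d =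
    \sum_i c 0 i * \sum_(d < D) mxpair (M i) Q ^+ d.
  move=> /spanC /submxP [y wvQ].
  have : (word_vector D U - c *m B) *m (word_vector D Q)^T = 0.
    by rewrite wvQ trmx_mul mulmxA proj mul0mx.
  rewrite mulmxBl => /eqP; rewrite subr_eq0 => /eqP /matrixP /(_ 0 0).
  rewrite word_vector_dot => ->.
  rewrite (mulmx_sum_row c B) mulmx_suml summxE; apply: eq_bigr => i _.
  by rewrite rowK -scalemxAl mxE word_vector_dot.
exists r, (c 0), M; split=> // Q CQ d ltdD.
(* Applied to a *: Q, the summed identity is polynomial in a; this separates
   the degrees d. *)
pose b k := \sum_i c 0 i * mxpair (M i) Q ^+ k - mxpair U Q ^+ k.
suff /polyP/(_ d) : \poly_(k < D) b k = 0.
  by rewrite coef_poly ltdD coef0 => /eqP; rewrite subr_eq0 => /eqP.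
apply: poly_eq0_of_horner_eq0 => a; rewrite horner_poly.
have := sum_orth _ (C_scale a Q CQ).
under eq_bigr do rewrite mxpairZr exprMn.
under [in RHS]eq_bigr do under eq_bigr do rewrite mxpairZr exprMn.
move=> orth; rewrite /b; under eq_bigr do rewrite mulrBl mulr_suml.
rewrite sumrB exchange_big /=.
under [X in _ - X]eq_bigr do rewrite mulrC.
rewrite orth; apply/eqP; rewrite subr_eq0; apply/eqP; apply: eq_bigr => i _.
rewrite mulr_sumr; apply: eq_bigr => k _.
by rewrite mulrCA mulrA [_ * a ^+ k]mulrC -mulrA.
Qed.

Section RatEmbedding.
Variables (K : fieldType) (charK0 : [pchar K] =i pred0).

(* MathComp only registers [ratr] as a ring morphism into a numFieldType;
   characteristic 0 is all its proof needs. *)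

Let denq_neq0 x : (denq x)%:~R != 0 :> K.
Proof.
have := denq_gt0 x; case: (denq x) => // n n_gt0.
by rewrite -pmulrn (pcharf0P _).1 // -lt0n.
Qed.

Fact ratr_char0_zmod_morphism : zmod_morphism (@ratr K).
Proof.
move=> x y; apply: (canLR (mulfK (denq_neq0 _))); apply: (mulIf (denq_neq0 x)).
rewrite mulrAC mulrBl divfK ?denq_neq0 // mulrAC -!rmorphM.
apply: (mulIf (denq_neq0 y)); rewrite mulrAC mulrBl divfK ?denq_neq0 //.
rewrite -!(rmorphM, rmorphB); congr _%:~R; apply: (@intr_inj rat).
rewrite !(rmorphM, rmorphB) /= [_ - _]lock /= -lock !numqE.
by rewrite (mulrAC y) -!mulrBl -mulrA mulrAC !mulrA.
Qed.

Fact ratr_char0_monoid_morphism : monoid_morphism (@ratr K).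
Proof.
split=> [|x y]; first by rewrite /ratr divr1.
rewrite /ratr mulrC mulrAC; apply: canLR (mulKf (denq_neq0 _)) _; rewrite !mulrA.
do 2!apply: canRL (mulfK (denq_neq0 _)) _; rewrite -!rmorphM; congr _%:~R.
apply: (@intr_inj rat); rewrite !rmorphM [x * y]lock /= !numqE -lock.
by rewrite -!mulrA mulrA mulrCA -!mulrA (mulrCA y).
Qed.

Definition ratr_char0 : {rmorphism rat -> K} :=
  HB.pack (@ratr K)
    (GRing.isZmodMorphism.Build _ _ _ ratr_char0_zmod_morphism)
    (GRing.isMonoidMorphism.Build _ _ _ ratr_char0_monoid_morphism).

End RatEmbedding.

Lemma lowrank_reproducing (K : fieldType) (charK0 : [pchar K] =i pred0) p n D :
  exists r (c : 'I_r -> K) (M : 'I_r -> 'M[K]_p),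
    (forall i, \rank (M i) <= n)%N /\
    forall Q : 'M[rat]_p, (\rank Q <= n)%N -> forall d, (d < D)%N ->
      \sum_i c i * mxpair (M i) (map_mx (ratr_char0 charK0) Q) ^+ d =
      mxpair 1%:M (map_mx (ratr_char0 charK0) Q) ^+ d.
Proof.
have [|r [c [M [rkM reprod]]]] :=
  @cone_reproducing rat p D (fun Q => \rank Q <= n)%N 1%:M.
  by move=> a Q; apply: leq_trans (mxrank_scale _ _).
exists r, (ratr_char0 charK0 \o c), (fun i => map_mx (ratr_char0 charK0) (M i)).
split=> [i|Q rkQ d ltdD]; first by rewrite mxrank_map.
rewrite -(map_mx1 (ratr_char0 charK0)) mxpair_map -rmorphXn.
rewrite -reprod // rmorph_sum; apply: eq_bigr => i _.
by rewrite rmorphM rmorphXn mxpair_map.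
Qed.

Lemma imsetT_full (T : finType) (f : T -> T) :
  (f @: setT == setT) = injectiveb f.
Proof.
apply/idP/idP => [/eqP full | /injectiveP inj].
  have /imset_injP inj_on : #|f @: setT| == #|[set: T]| by rewrite full.
  by apply/injectiveP => x y; apply: inj_on; rewrite inE.
by rewrite eqEcard subsetT (card_imset _ inj) /=.
Qed.

Section Polarization.
Variable R : comRingType.

Lemma sum_supsets_sign d (A : {set 'I_d}) :
  \sum_(S : {set 'I_d} | A \subset S) (-1) ^+ (d - #|S|) = (A == setT)%:R :> R.
Proof.
(* Expand \prod_i (1 + G i) along the set S of indices where 1 is picked. *)
pose G i : R := if i \in A then 0 else -1.
have := bigA_distr 1 +%R (fun _ : 'I_d => 1 : R) G; rewrite /= => distr.
transitivity (\prod_i (1 + G i)).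
  rewrite distr big_mkcond /=; apply: eq_bigr => S _.
  rewrite (bigID (mem S)) /= big1 ?mul1r => [|i ->] //.
  have [AS|/subsetPn [i Ai Si]] := boolP (A \subset S).
    rewrite (eq_bigr (fun _ => -1)) => [|i /negPf Si]; last first.
      by rewrite Si /G; case: ifP => // /(subsetP AS); rewrite Si.
    by rewrite prodr_const -[X in (X - _)%N](card_ord d) -(cardC S) addKn.
  by rewrite (bigD1 i) //= (negPf Si) /G Ai mul0r.
have [AT|] := eqVneq A setT; first by apply: big1 => i _; rewrite /G AT inE addr0.
rewrite eqEsubset subsetT /= => /subsetPn [i _ Ai].
by rewrite (bigD1 i) //= /G (negPf Ai) addrN mul0r.
Qed.

Lemma polarization_prod d (y : 'I_d -> R) :
  d`!%:R * \prod_t y t =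
  \sum_(S : {set 'I_d}) (-1) ^+ (d - #|S|) * (\sum_(t in S) y t) ^+ d.
Proof.
have expand (S : {set 'I_d}) : (\sum_(t in S) y t) ^+ d =
    \sum_(g : {ffun 'I_d -> 'I_d} | g @: setT \subset S) \prod_t y (g t).
  rewrite -[X in _ ^+ X](card_ord d) -prodr_const bigA_distr_big.
  apply: eq_bigl => g; apply/ffun_onP/subsetP => [gS _ /imsetP [t _ ->] | imS t].
    exact: gS.
  by apply: imS; rewrite imset_f.
under [RHS]eq_bigr do rewrite expand mulr_sumr.
rewrite (exchange_big_dep xpredT) //=.
transitivity (\sum_(g : {ffun 'I_d -> 'I_d} | injectiveb g) \prod_t y t).
  rewrite mulr_natl sumr_const; congr (_ *+ _).
  by rewrite -[in LHS](card_ord d) -ffactnn -card_inj_ffuns cardsE.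
rewrite big_mkcond; apply: eq_bigr => g _ /=.
rewrite -mulr_suml sum_supsets_sign imsetT_full.
by case: injectiveP => [inj|_]; rewrite ?mul1r ?mul0r // (reindex_inj inj).
Qed.

End Polarization.

Lemma expr_sumZ (R : comRingType) (A : comAlgType R) (I : finType)
    (x : I -> R) (v : I -> A) d :
  (\sum_i x i *: v i) ^+ d =
  \sum_(w : {ffun 'I_d -> I}) (\prod_t x (w t)) *: \prod_t v (w t).
Proof.
rewrite -[X in _ ^+ X](card_ord d) -prodr_const bigA_distr_bigA /=.
by apply: eq_bigr => w _; rewrite scaler_prod.
Qed.

Lemma mpolyX_s2m (R : ringType) n (s : seq 'I_n) :
  'X_[s2m s] = \prod_(i <- s) 'X_i :> {mpoly R[n]}.
Proof.
elim: s => [|i s IHs].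
  by rewrite big_nil -mpolyX0; congr 'X_[_]; apply/mnmP => j; rewrite mnmE mnm0E.
rewrite big_cons -IHs -mpolyXD; congr 'X_[_]; apply/mnmP => j.
by rewrite mnmDE !mnmE /=.
Qed.

Lemma comp_mpolyA (R : comRingType) n k l (q : {mpoly R[n]})
    (lq : n.-tuple {mpoly R[k]}) (lr : k.-tuple {mpoly R[l]}) :
  (q \mPo lq) \mPo lr = q \mPo [tuple tnth lq i \mPo lr | i < n].
Proof.
rewrite [q]mpolyE (raddf_sum (comp_mpoly lq)) (raddf_sum (comp_mpoly lr)).
rewrite (raddf_sum (comp_mpoly _)); apply: eq_bigr => m _.
rewrite /= !comp_mpolyZ !comp_mpolyX rmorph_prod /=; congr (_ *: _).
by apply: eq_bigr => i _; rewrite rmorphXn /= tnth_mktuple.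
Qed.

Section GLAction.
Variables (K : fieldType) (p : nat).
Implicit Types (g h : 'M[K]_p) (q : polT K p) (A B : 'I_p -> 'M[K]_3).
Implicit Types (F G : 'M[polT K p]_3).

Lemma glact_tvar g k e : glact g (tvar K k e) = \sum_l g l k *: tvar K l e.
Proof.
rewrite /glact /tvar comp_mpolyXU -tnth_nth tnth_mktuple mxvecE mxE.
by apply: eq_bigr => l _; rewrite mul_mpolyC.
Qed.

Lemma glactZ g x q : glact g (x *: q) = x *: glact g q.
Proof. exact: linearZ. Qed.

Lemma glact_sum g I (r : seq I) (P : pred I) (Q : I -> polT K p) :
  glact g (\sum_(i <- r | P i) Q i) = \sum_(i <- r | P i) glact g (Q i).
Proof. exact: raddf_sum. Qed.

Lemma glactXn g q d : glact g (q ^+ d) = glact g q ^+ d.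
Proof. exact: rmorphXn. Qed.

Lemma glact_comp g h q : glact g (glact h q) = glact (g *m h) q.
Proof.
rewrite /glact comp_mpolyA; congr comp_mpoly.
apply: eq_from_tnth => x; rewrite !tnth_mktuple; case/mxvec_indexP: x => k e.
rewrite !mxvecE !mxE -/(glact g _) glact_sum.
under eq_bigr do rewrite mul_mpolyC glactZ glact_tvar scaler_sumr.
rewrite exchange_big /=; apply: eq_bigr => l _.
rewrite mxE mul_mpolyC scaler_suml.
by apply: eq_bigr => j _; rewrite scalerA mulrC.
Qed.

Lemma glact_mx_comp g h F : glact_mx g (glact_mx h F) = glact_mx (g *m h) F.
Proof. by apply/matrixP => i j; rewrite !mxE glact_comp. Qed.

Definition linform (a : 'M[K]_(p, 3)) : polT K p :=
  \sum_(u : 'I_p * 'I_3) a u.1 u.2 *: tvar K u.1 u.2.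

Lemma linform_sum I (r : seq I) (P : pred I) (a : I -> 'M[K]_(p, 3)) :
  linform (\sum_(i <- r | P i) a i) = \sum_(i <- r | P i) linform (a i).
Proof.
rewrite /linform exchange_big /=; apply: eq_bigr => u _.
by rewrite summxE scaler_suml.
Qed.

Lemma linform_delta k e : linform (delta_mx k e) = tvar K k e.
Proof.
rewrite /linform (bigD1 (k, e)) //= mxE !eqxx scale1r big1 ?addr0 // => -[l f].
by rewrite mxE -xpair_eqE => /negPf ->; rewrite scale0r.
Qed.

Lemma linform_mul g a :
  linform (g *m a) = \sum_u mxpair g (delta_mx u.1 u.2 *m a^T) *: tvar K u.1 u.2.
Proof. by apply: eq_bigr => u _; rewrite mulmx_mxpair. Qed.

Lemma glact_linform g a : glact g (linform a) = linform (g *m a).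
Proof.
rewrite /linform glact_sum.
under eq_bigr do rewrite glactZ glact_tvar scaler_sumr.
under [RHS]eq_bigr do rewrite mxE scaler_suml.
rewrite -(pair_bigA _ (fun k e => \sum_l a k e *: (g l k *: tvar K l e))) /=.
rewrite -(pair_bigA _ (fun l e => \sum_k (g l k * a k e) *: tvar K l e)) /=.
rewrite exchange_big /=; under eq_bigr do rewrite exchange_big /=.
rewrite exchange_big /=; do 3!(apply: eq_bigr => ? _).
by rewrite scalerA mulrC.
Qed.

Definition glact_pts g A : 'I_p -> 'M[K]_3 := fun k => \sum_l g l k *: A l.

Lemma meval_glact g A q : (glact g q).@[coords A] = q.@[coords (glact_pts g A)].
Proof.
rewrite /glact comp_mpoly_meval; apply: meval_eq => x.
case/mxvec_indexP: x => k e; rewrite /coords !mxvecE !mxE tnth_mktuple mxvecE mxE.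
rewrite summxE raddf_sum /=; apply: eq_bigr => l _.
by rewrite mevalM mevalC /tvar mevalXU /coords mxvecE !mxE.
Qed.

Lemma evalF_eq F A B : A =1 B -> evalF F A = evalF F B.
Proof.
move=> eqAB; apply/matrixP => i j; rewrite !mxE; congr meval.
by rewrite /coords; congr (mxvec _ 0); apply/matrixP => k e; rewrite !mxE eqAB.
Qed.

Lemma evalF0 A : evalF 0 A = 0.
Proof. by apply/matrixP => i j; rewrite !mxE meval0. Qed.

Lemma evalFD F G A : evalF (F + G) A = evalF F A + evalF G A.
Proof. by apply/matrixP => i j; rewrite !mxE mevalD. Qed.

Lemma evalFZ c F A : evalF (c%:MP *: F) A = c *: evalF F A.
Proof. by apply/matrixP => i j; rewrite !mxE mevalM mevalC. Qed.

Lemma evalF_glact g F A : evalF (glact_mx g F) A = evalF F (glact_pts g A).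
Proof. by apply/matrixP => i j; rewrite !mxE meval_glact. Qed.

Lemma glact_pts_skew g A :
  (forall k, Defs.skew (A k)) -> forall k, Defs.skew (glact_pts g A k).
Proof.
move=> skA k; rewrite /Defs.skew /glact_pts raddf_sum -sumrN.
by apply: eq_bigr => l _; rewrite [LHS]linearZ /= skA scalerN.
Qed.

Lemma glact_mx_equivariant g F : equivariant F -> equivariant (glact_mx g F).
Proof.
move=> eqF Q A SO3Q skA; rewrite !evalF_glact -eqF //; last exact: glact_pts_skew.
apply: evalF_eq => k; rewrite mulmx_sumr mulmx_suml; apply: eq_bigr => l _.
by rewrite scalemxAl scalemxAr.
Qed.

Lemma glact_mx_depends_on_first3 h F :
  (forall l k : 'I_p, (3 <= l)%N -> h l k = 0) ->
  depends_on_first3 (glact_mx h F).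
Proof.
move=> h0 A B _ _ eqAB; rewrite !evalF_glact; apply: evalF_eq => k.
apply: eq_bigr => l _.
by case: (ltnP l 3) => [/eqAB -> | /h0 ->] //; rewrite !scale0r.
Qed.

Lemma GLspan_equivariant U F :
  (forall G, U G -> equivariant G) -> GLspan U F -> equivariant F.
Proof.
move=> eqU; apply.
- by move=> Q A _ _; rewrite !evalF0 mulmx0 mul0mx.
- move=> G H eqG eqH Q A SO3Q skA.
  by rewrite !evalFD eqG // eqH // mulmxDr mulmxDl.
- by move=> c G eqG Q A SO3Q skA; rewrite !evalFZ eqG // -scalemxAr -scalemxAl.
- by move=> g G _; apply: glact_mx_equivariant.
- exact: eqU.
Qed.

End GLAction.

Section Reproduction.
Variables (K : fieldType) (charK0 : [pchar K] =i pred0) (p D r : nat).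
Variables (c : 'I_r -> K) (M : 'I_r -> 'M[K]_p).
Local Notation "A ^Q" := (map_mx (ratr_char0 charK0) A)
  (at level 2, format "A ^Q").
Hypothesis reprod : forall Q : 'M[rat]_p, (\rank Q <= 3)%N ->
  forall d, (d < D)%N ->
    \sum_i c i * mxpair (M i) Q^Q ^+ d = mxpair 1%:M Q^Q ^+ d.

Let fact_neq0 d : d`!%:R != 0 :> K.
Proof. by rewrite (pcharf0P _).1 // -lt0n fact_gt0. Qed.

Lemma reprod_polarized d (a : 'M[rat]_(p, 3)) (Y : 'I_d -> 'M[rat]_(p, 3)) :
  (d < D)%N ->
  \sum_i c i * \prod_t mxpair (M i) (Y t *m a^T)^Q =
  \prod_t mxpair 1%:M (Y t *m a^T)^Q.
Proof.
move=> ltdD; apply: (mulfI (fact_neq0 d)).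
have polar N : d`!%:R * \prod_t mxpair N (Y t *m a^T)^Q =
    \sum_(S : {set 'I_d}) (-1) ^+ (d - #|S|) *
      mxpair N ((\sum_(t in S) Y t) *m a^T)^Q ^+ d.
  rewrite polarization_prod; apply: eq_bigr => S _.
  by rewrite mulmx_suml map_mx_sum mxpair_sumr.
rewrite polar mulr_sumr; under eq_bigr do rewrite mulrCA polar mulr_sumr.
rewrite exchange_big /=; apply: eq_bigr => S _.
have rk3 : (\rank ((\sum_(t in S) Y t) *m a^T) <= 3)%N.
  exact: leq_trans (mxrankM_maxl _ _) (rank_leq_col _).
rewrite -(reprod rk3 ltdD) mulr_sumr.
by apply: eq_bigr => i _; rewrite mulrCA.
Qed.

Definition reproduced (q : polT K p) := \sum_i c i *: glact (M i) q = q.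

Lemma reproduced_lincomb (I : eqType) (s : seq I) (x : I -> K)
    (q : I -> polT K p) :
  {in s, forall j, reproduced (q j)} -> reproduced (\sum_(j <- s) x j *: q j).
Proof.
move=> rq; rewrite /reproduced.
under eq_bigr do rewrite glact_sum scaler_sumr.
rewrite exchange_big /= big_seq [RHS]big_seq; apply: eq_bigr => j js.
rewrite -[in RHS](rq j js) scaler_sumr; apply: eq_bigr => i _.
by rewrite glactZ !scalerA mulrC.
Qed.

Lemma reproduced_linform_expn (a : 'M[rat]_(p, 3)) d :
  (d < D)%N -> reproduced (linform a^Q ^+ d).
Proof.
move=> ltdD; rewrite /reproduced -[a^Q in RHS]mul1mx.
rewrite [in RHS]linform_mul [in RHS]expr_sumZ.
under eq_bigr do rewrite glactXn glact_linform linform_mul expr_sumZ scaler_sumr.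
rewrite exchange_big; apply: eq_bigr => w _.
under eq_bigr do rewrite scalerA; rewrite -scaler_suml; congr (_ *: _).
have rat_entries N : \prod_t mxpair N (delta_mx (w t).1 (w t).2 *m a^Q^T) =
    \prod_t mxpair N (delta_mx (w t).1 (w t).2 *m a^T)^Q.
  by apply: eq_bigr => t _; rewrite map_mxM map_trmx map_delta_mx.
rewrite rat_entries -reprod_polarized //.
by apply: eq_bigr => i _; rewrite rat_entries.
Qed.

Lemma reproduced_linform_prod d (a : 'I_d -> 'M[rat]_(p, 3)) :
  (d < D)%N -> reproduced (\prod_t linform (a t)^Q).
Proof.
move=> ltdD.
have signZ k (q : polT K p) : (-1) ^+ k * q = ((-1) ^+ k : K) *: q.
  by rewrite -signr_odd mulr_sign -signr_odd scaler_sign.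
have -> : \prod_t linform (a t)^Q = \sum_(S : {set 'I_d})
    ((d`!%:R)^-1 * (-1) ^+ (d - #|S|)) *: linform (\sum_(t in S) a t)^Q ^+ d.
  apply: (scalerI (fact_neq0 d)).
  rewrite scaler_nat -[LHS]mulr_natl polarization_prod scaler_sumr.
  apply: eq_bigr => S _; rewrite scalerA mulrA mulfV ?fact_neq0 // mul1r.
  by rewrite signZ map_mx_sum linform_sum.
by apply: reproduced_lincomb => S _; apply: reproduced_linform_expn.
Qed.

Lemma reproduced_monomial m : (mdeg m < D)%N -> reproduced 'X_[m].
Proof.
move=> ltmD; set s := m2s m.
have -> : 'X_[m] =
    \prod_(t < size s) linform (vec_mx (delta_mx 0 (tnth (in_tuple s) t)))^Q.
  rewrite -{1}(s2mK m) mpolyX_s2m (big_tuple _ _ (in_tuple s)).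
  apply: eq_bigr => t _; case/mxvec_indexP: (tnth _ t) => k e.
  by rewrite vec_mx_delta map_delta_mx linform_delta.
by apply: reproduced_linform_prod; rewrite size_m2s.
Qed.

Lemma reproduced_bounded q : (msize q <= D)%N -> reproduced q.
Proof.
move=> le_qD; rewrite [q]mpolyE; apply: reproduced_lincomb => m m_supp.
exact: reproduced_monomial (leq_trans (msize_mdeg_lt m_supp) le_qD).
Qed.

End Reproduction.

Theorem corollary2p8 (K : fieldType) (charK0 : [pchar K] =i pred0)
  (p : nat) (hp : (3 <= p)%N) :
  forall F : 'M[polT K p]_3,
    equivariant F <->
    GLspan (fun G : 'M[polT K p]_3 => equivariant G /\ depends_on_first3 G) F.
Proof.
move=> F; split=> [eqF | ]; last by apply: GLspan_equivariant => G [].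
move=> S S0 SD SZ Sglact SU.
pose D := \max_(ij : 'I_3 * 'I_3) msize (F ij.1 ij.2).
have [r [c [M [rkM reprod]]]] := lowrank_reproducing charK0 p 3 D.
have -> : F = \sum_i (c i)%:MP *: glact_mx (M i) F.
  apply/matrixP => i j; rewrite summxE.
  rewrite -[LHS](reproduced_bounded reprod (leq_bigmax (i, j))).
  by apply: eq_bigr => l _; rewrite !mxE mul_mpolyC.
elim/big_rec: _ => [|i G _ SG]; first exact: S0.
apply: SD SG; apply: SZ.
have [g [h [unit_g -> h0]]] := mxrank_factor (rkM i).
rewrite -glact_mx_comp; apply: Sglact unit_g _; apply: SU; split.
  exact: glact_mx_equivariant.
exact: glact_mx_depends_on_first3.
Qed.
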